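(* Let $n\ge 1$ and let $T$ be an HR-tree whose labels are $1,\dots,n$. If $\mathrm{leaf}(T)=i$, then the permutation $w(T)\in\mathfrak S_n$ satisfies $\mathrm{run}(w(T))\ge i$.
   Context: All trees are rooted binary trees in which each child of a node is designated as a left or a right child. For a finite totally ordered set $Y$, a min–max tree on $Y$ is such a tree whose nodes are labeled bijectively by $Y$ so that the label of each node is either the minimum or the maximum of the labels in the subtree rooted at that node. A node with at least one child is an inner node; an inner node is a min-node (resp. max-node) if its label is the minimum (resp. maximum) of the labels of its subtree. An HR-tree is a min–max tree in which every inner node $s$ has a nonempty right subtree, and this right subtree contains the maximum label of the subtree rooted at $s$ if $s$ is a min-node, and the minimum label of that subtree if $s$ is a max-node (so a node with exactly one child has only a right child). The reading word $w(T)$ is the in-order reading: $w(T)=w(L)\,\ell\,w(R)$ where $\ell$ is the root label and $L,R$ are the left and right subtrees ($w(\emptyset)$ empty). $\mathrm{leaf}(T)$ is the number of nodes of $T$ without children. For $\pi=\pi_1\cdots\pi_n\in\mathfrak S_n$, $\pi$ changes direction at $i\in\{2,\dots,n-1\}$ if $\pi_{i-1}<\pi_i>\pi_{i+1}$ or $\pi_{i-1}>\pi_i<\pi_{i+1}$, and $\mathrm{run}(\pi)$ (the number of alternating runs) is $1$ plus the number of such indices $i$. *)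

From mathcomp Require Import all_boot.
Set Implicit Arguments. Unset Strict Implicit. Unset Printing Implicit Defensive.

Inductive tree : Type :=
| Empty : tree
| Node : tree -> nat -> tree -> tree.

Fixpoint labels (t : tree) : seq nat :=
  match t with
  | Empty => [::]
  | Node l a r => labels l ++ a :: labels r
  end.

Fixpoint word (t : tree) : seq nat :=
  match t with
  | Empty => [::]
  | Node l a r => word l ++ a :: word r
  end.

Fixpoint leaf (t : tree) : nat :=
  match t with
  | Empty => 0
  | Node Empty _ Empty => 1
  | Node l _ r => leaf l + leaf r
  end.

Definition is_min (x : nat) (s : seq nat) : bool := (x \in s) && all (fun y => x <= y) s.
Definition is_max (x : nat) (s : seq nat) : bool := (x \in s) && all (fun y => y <= x) s.

Definition is_inner (l r : tree) : bool :=
  match l, r with Empty, Empty => false | _, _ => true end.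

Fixpoint minmax_tree (t : tree) : bool :=
  match t with
  | Empty => true
  | Node l a r =>
      let s := labels (Node l a r) in
      [&& is_min a s || is_max a s, minmax_tree l & minmax_tree r]
  end.

Fixpoint hr_cond (t : tree) : bool :=
  match t with
  | Empty => true
  | Node l a r =>
      let s := labels (Node l a r) in
      [&& (is_inner l r ==>
             [&& labels r != [::],
                 is_min a s ==> has (fun x => is_max x s) (labels r) &
                 is_max a s ==> has (fun x => is_min x s) (labels r)]),
          hr_cond l & hr_cond r]
  end.

Definition HR_tree (t : tree) : bool := minmax_tree t && hr_cond t.

(* pi changes direction at 0-indexed position j (1 <= j <= size-2) *)
Definition changes_dir (w : seq nat) (j : nat) : bool :=
  let a := nth 0 w j.-1 in let b := nth 0 w j in let c := nth 0 w j.+1 in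
  ((a < b) && (b > c)) || ((a > b) && (b < c)).

Definition run (w : seq nat) : nat :=
  1 + count (changes_dir w) (iota 1 (size w - 2)).

(* At an
   inner node whose two subtrees are nonempty, the root label is an extremum of
   its subtree, so the last letter of w(L), the root label and the first letter
   of w(R) form a peak or a valley.  Hence the number of direction changes of
   w(T) is at least the number of such nodes, which is leaf(T) - 1. *)

From mathcomp Require Import all_boot.
From mathcomp Require Import zify.

Definition turn (x y z : nat) : bool := ((x < y) && (y > z)) || ((x > y) && (y < z)).

Definition turn_head (x : nat) (s : seq nat) : nat :=
  if s is y :: z :: _ then turn x y z else 0.

Fixpoint turns (s : seq nat) : nat :=
  if s is x :: t then turn_head x t + turns t else 0.

Lemma run_turns w : run w = (turns w).+1.
Proof.
rewrite /run add1n; congr _.+1.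
elim: w => [|x [|y [|z t]] IH] //=.
rewrite subSS /= in IH *; rewrite -IH subn1 /= (iotaDl 1 1) count_map.
congr (_ + _); apply: eq_in_count => -[|j] //.
by rewrite mem_iota.
Qed.

(* Every triple is counted once on exactly one side of the overlap [x; a]. *)
Lemma turns_cat_overlap p x a t :
  turns (p ++ [:: x, a & t]) = turns (p ++ [:: x; a]) + turns [:: x, a & t].
Proof.
elim: p => [|b p IH] /=; first by rewrite addn0.
by rewrite IH addnA; case: p {IH} => [|c [|d p]].
Qed.

Lemma leq_turns_rcons s a : turns s <= turns (rcons s a).
Proof.
elim: s => [|b s IH] //=; apply: leq_add IH.
by case: s => [|c [|d s]].
Qed.

Lemma turn_at_extremum s x a y :
  is_min a s || is_max a s -> x \in s -> y \in s -> x != a -> y != a ->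
  turn x a y.
Proof.
move=> /orP [] /andP [_ /allP bound] /bound xs /bound ys xa ya; rewrite /turn; lia.
Qed.

Lemma turns_cat_extremum L a R :
  L != [::] -> R != [::] -> a \notin L -> a \notin R ->
  is_min a (L ++ a :: R) || is_max a (L ++ a :: R) ->
  (turns L + turns R).+1 <= turns (L ++ a :: R).
Proof.
case/lastP: L => [//|p x] _; case: R => [//|y q] _ aL aR ext_a.
have peak : turn x a y.
  apply: turn_at_extremum ext_a _ _ _ _.
  - by rewrite mem_cat mem_rcons mem_head.
  - by rewrite mem_cat in_cons mem_head !orbT.
  - by apply: contraNneq aL => <-; rewrite mem_rcons mem_head.
  - by apply: contraNneq aR => <-; rewrite mem_head.
rewrite cat_rcons turns_cat_overlap /= peak.
have := leq_turns_rcons (rcons p x) a; rewrite -!cats1 -catA /=; lia.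
Qed.

Lemma labels_Node_neq_nil l a r : labels (Node l a r) != [::].
Proof. by rewrite /= -size_eq0 size_cat addnS. Qed.

Lemma leaf_le_turns T :
  uniq (labels T) -> minmax_tree T -> leaf T <= (turns (labels T)).+1.
Proof.
elim: T => [//|l IHl a r IHr].
rewrite [labels _]/= [minmax_tree _]/= cat_uniq /= negb_or.
case/and3P=> /IHl {}IHl /andP [aL _] /andP [aR /IHr {}IHr].
case/and3P=> ext_a /IHl {}IHl /IHr {}IHr.
case: l aL ext_a IHl => [|l1 b l2] aL ext_a IHl;
  case: r aR ext_a IHr => [|r1 c r2] aR ext_a IHr //.
- by rewrite add0n cat0s (leq_trans IHr) // ltnS leq_addl.
- by rewrite addn0 cats1 (leq_trans IHl) // ltnS leq_turns_rcons.
- have junction := @turns_cat_extremum _ a _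
    (labels_Node_neq_nil l1 b l2) (labels_Node_neq_nil r1 c r2) aL aR ext_a.
  by apply: leq_trans (leq_add IHl IHr) _; rewrite addSn addnS ltnS.
Qed.

Lemma word_labels t : word t = labels t.
Proof. by elim: t => //= l -> a r ->. Qed.

Theorem mainTheorem1 (n : nat) (T : tree) (i : nat) :
  1 <= n ->
  perm_eq (labels T) (iota 1 n) ->
  HR_tree T ->
  leaf T = i ->
  i <= run (word T).
Proof.
move=> _ perm_T /andP [minmax_T _] <-.
rewrite run_turns word_labels; apply: leaf_le_turns minmax_T.
by rewrite (perm_uniq perm_T) iota_uniq.
Qed.
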